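(* Assume $-\infty<l<r<\infty$, $\inf\operatorname{supp}\mu>-\infty$ and $\sup\operatorname{supp}\mu<\infty$. If $\limsup_{x\searrow l}\frac{|\eta(x)|}{x-l}<\infty$, then: $q(l+)=\infty$ implies $\liminf_{y\searrow l}G_y(\bar a(y))>0$. If $\limsup_{x\nearrow r}\frac{|\eta(x)|}{r-x}<\infty$, then: $q(r-)=\infty$ implies $\liminf_{y\nearrow r}G_y(\bar a(y))>0$.
   Context: Let $I=(l,r)$, $\eta\colon\mathbb R\to\mathbb R$ Borel with $\eta\ne0$ on $I$, $1/\eta^2\in L^1_{\mathrm{loc}}(I)$, $\eta=0$ off $I$, $m\in I$. $q(y,x)=\int_y^x\int_y^u\frac{2}{\eta^2(z)}dz\,du\in[0,\infty]$; $q(l+)=\lim_{x\searrow l}q(m,x)$, $q(r-)=\lim_{x\nearrow r}q(m,x)$. $\mu\ne\delta_0$ is a centered probability measure, $G_y(a)=\int q(y,y+ax)\mu(dx)$, and $\bar a(y)=\frac{l-y}{\inf\operatorname{supp}\mu}\wedge\frac{r-y}{\sup\operatorname{supp}\mu}$ for $y\in I$. *)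

From HB Require Import structures.
From mathcomp Require Import all_boot all_order all_algebra.
From mathcomp Require Import all_classical all_reals all_analysis.
Set Implicit Arguments. Unset Strict Implicit. Unset Printing Implicit Defensive.
Import Order.TTheory GRing.Theory Num.Theory.
Import numFieldNormedType.Exports.
Local Open Scope classical_set_scope.
Local Open Scope ring_scope.

Section Defs.
Variable R : realType.

Definition twoinvsq (eta : R -> R) (z : R) : \bar R :=
  if eta z == 0 then +oo%E else (2 / eta z ^+ 2)%:E.

(* q(y,x) = int_y^x int_y^u 2/eta^2(z) dz du, with oriented integrals;
   for x < y both orientations flip, giving the nonnegative value below. *)
Definition qfun (eta : R -> R) (y x : R) : \bar R :=
  if y <= x then
    (\int[lebesgue_measure]_(u in `[y, x])
       \int[lebesgue_measure]_(z in `[y, u]) twoinvsq eta z)%E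
  else
    (\int[lebesgue_measure]_(u in `[x, y])
       \int[lebesgue_measure]_(z in `[u, y]) twoinvsq eta z)%E.

Definition supp (mu : set R -> \bar R) : set R :=
  [set x | forall e : R, 0 < e -> (0 < mu (ball x e))%E].

Definition Gfun (eta : R -> R) (mu : probability R R) (y a : R) : \bar R :=
  (\int[mu]_x qfun eta y (y + a * x))%E.

Definition abar (mu : probability R R) (l r y : R) : R :=
  Order.min ((l - y) / inf (supp mu)) ((r - y) / sup (supp mu)).

End Defs.

(* Near [l], the bound [|eta x| <= C (x - l)] gives [2 / eta^2 >= 2 / (C (y - l))^2] on the whole
   half-line [z <= y] (eta vanishes left of [l]), so [q(y, w)] is at least a constant times
   [((w - y) / (y - l))^2] for [w <= y].  A centred probability other than [delta_0] has support
   points [p < 0 < p'], so it charges the ball [B] of radius [|p|/2] around [p]; since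
   [abar(y) >= k (y - l)] with [k] depending only on [inf supp mu] and [sup supp mu], every [x] in [B]
   moves [y + abar(y) x] a distance of order [y - l] to the left of [y].  Hence [G_y(abar(y))] is at
   least a positive constant times [mu B], uniformly in [y].  The right endpoint is symmetric. *)

From HB Require Import structures.
From mathcomp Require Import all_boot all_order all_algebra.
From mathcomp Require Import all_classical all_reals all_analysis.
From mathcomp Require Import ring lra.
Set Implicit Arguments. Unset Strict Implicit. Unset Printing Implicit Defensive.
Import Order.TTheory GRing.Theory Num.Theory.
Import numFieldNormedType.Exports.
Import HBNNSimple.
Local Open Scope classical_set_scope.
Local Open Scope ring_scope.

Section integral_lower_bound.
Context d (T : measurableType d) (R : realType) (mu : {measure set T -> \bar R}).

(* No measurability of [f] is needed: the integral of a nonnegative function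
   dominates the integral of every simple function below it. *)
Lemma integral_ge_measure (D A : set T) (f : T -> \bar R) (c : R) :
  measurable D -> measurable A -> 0 <= c ->
  (forall x, D x -> (0 <= f x)%E) -> (forall x, D x -> A x -> (c%:E <= f x)%E) ->
  (c%:E * mu (A `&` D) <= \int[mu]_(x in D) f x)%E.
Proof.
move=> mD mA c0 f0 fc.
pose h := scale_nnsfun (indic_nnsfun R mA) c0.
have -> : (c%:E * mu (A `&` D) = \int[mu]_(x in D) (h x)%:E)%E.
  under eq_integral do rewrite /h /= measurable_realfun.mindicE.
  rewrite (@integralZl_indic _ _ _ _ _ _ (fun _ => A)) ?integral_indic//.
  by move=> c0'; move: (lt_le_trans c0' c0); rewrite ltxx.
rewrite integral_nnsfun// ge0_integralE//.
apply: ereal_sup_ubound; exists (proj_nnsfun h mD); last by rewrite mrestrict.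
move=> x /=; rewrite /patch !measurable_realfun.mindicE.
have [Dx|Dx] := pselect (D x); last by rewrite (memNset Dx) !mulr0.
rewrite (mem_set Dx) mulr1; have [Ax|Ax] := pselect (A x).
  by rewrite (mem_set Ax) mulr1 fc.
by rewrite (memNset Ax) mulr0 f0.
Qed.

Lemma measure_eq0_of_integral_eq0 (D A : set T) (f : T -> \bar R) (c : R) :
  0 < c -> measurable D -> measurable A -> A `<=` D ->
  (forall x, D x -> (0 <= f x)%E) -> (forall x, A x -> (c%:E <= f x)%E) ->
  (\int[mu]_(x in D) f x = 0)%E -> mu A = 0%E.
Proof.
move=> c0 mD mA AD f0 fc f_eq0; apply/eqP; rewrite eq_le measure_ge0 andbT.
have := integral_ge_measure mD mA (ltW c0) f0 (fun x _ => fc x).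
by rewrite f_eq0 setIidl// -[X in (_ <= X)%E](mule0 c%:E) lee_pmul2l ?lte_fin.
Qed.

Lemma measure_gt0_eq0_of_integral_eq0 (g : T -> R) :
  measurable_fun setT g -> (forall x, 0 <= g x) ->
  (\int[mu]_x (g x)%:E = 0)%E -> mu [set x | 0 < g x] = 0%E.
Proof.
move=> mg g0 g_eq0.
have mge c : measurable [set x | c <= g x].
  have -> : [set x | c <= g x] = setT `&` g @^-1` `[c, +oo[ by rewrite setTI set_itvcy.
  exact: mg measurableT _ (measurable_itv _).
have mpos : measurable [set x | 0 < g x].
  have -> : [set x | 0 < g x] = setT `&` g @^-1` `]0, +oo[ by rewrite setTI set_itvoy.
  exact: mg measurableT _ (measurable_itv _).
apply/(negligibleP _ mpos).
have -> : [set x | 0 < g x] = \bigcup_n [set x | n.+1%:R^-1 <= g x].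
  apply/seteqP; split => [x /= gx|x [n _ /=]]; last first.
    by apply: lt_le_trans; rewrite invr_gt0.
  exists (Num.truncn (g x)^-1) => //=; rewrite -[leRHS]invrK lef_pV2 ?posrE ?invr_gt0//.
  exact/ltW/truncnS_gt.
apply: negligible_bigcup => n; apply/(negligibleP _ (mge _)).
apply: (measure_eq0_of_integral_eq0 (c := n.+1%:R^-1) _ measurableT) g_eq0 => //.
by move=> x _; rewrite lee_fin.
Qed.

Lemma measure_lt0_eq0_of_integral_eq0 (g : T -> R) :
  mu.-integrable setT (EFin \o g) -> (\int[mu]_x (g x)%:E = 0)%E ->
  mu [set x | 0 < g x] = 0%E -> mu [set x | g x < 0] = 0%E.
Proof.
move=> intg g_eq0 pos0.
have /integrableP[/measurable_realfun.measurable_EFinP mg _] := intg.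
have mpos : measurable [set x | 0 < g x].
  have -> : [set x | 0 < g x] = setT `&` g @^-1` `]0, +oo[ by rewrite setTI set_itvoy.
  exact: mg measurableT _ (measurable_itv _).
have gpos_eq0 : (\int[mu]_x (EFin \o g)^\+ x = 0)%E.
  rewrite (negligible_integral mpos)//; last exact: integrable_funepos.
  apply: integral0_eq => x [_ /= /negP]; rewrite -leNgt => gx0.
  by rewrite funeposE /=; apply/max_idPr; rewrite lee_fin.
move: g_eq0; rewrite integralE gpos_eq0 sub0e => /eqP; rewrite eqe_oppLR oppe0 => /eqP gneg_eq0.
have -> : [set x | g x < 0] = [set x | 0 < Num.max (- g x) 0].
  by apply/seteqP; split => x /=; rewrite lt_max ltxx orbF oppr_gt0.
apply: measure_gt0_eq0_of_integral_eq0.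
- by apply: measurable_realfun.measurable_maxr => //; exact: measurableT_comp.
- by move=> x; rewrite le_max lexx orbT.
- by rewrite -gneg_eq0; apply: eq_integral => x _; rewrite funenegE /= EFin_max.
Qed.

End integral_lower_bound.

Lemma gt0_inv_nat_le (R : realType) (x : R) : 0 < x ->
  exists n, n.+1%:R^-1 <= x <= n.+1%:R.
Proof.
move=> x0; have lt_trunc := truncnS_gt (x + x^-1).
have xi0 : 0 < x^-1 by rewrite invr_gt0.
exists (Num.truncn (x + x^-1)); apply/andP; split.
  rewrite -[leRHS](invrK x) lef_pV2 ?posrE//; apply/ltW/(le_lt_trans _ lt_trunc).
  by rewrite lerDr ltW.
by apply/ltW/(le_lt_trans _ lt_trunc); rewrite lerDl ltW.
Qed.

Section support.
Context (R : realType) (mu : {measure set R -> \bar R}).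

Lemma supp_itv (a b : R) :
  (0 < mu `[a, b]%classic)%E -> exists2 p, supp mu p & a <= p <= b.
Proof.
move=> mu_ab.
(* [inf T] is where the mass of [[a, t]] starts, hence a support point. *)
pose T := [set t : R | (0 < mu `[a, t]%classic)%E].
have Ta : lbound T a.
  move=> t; apply: contraPP => /negP; rewrite -ltNge => ta.
  by rewrite /T /= set_itv_ge ?measure0 ?ltxx// bnd_simp -ltNge.
have hinfT : has_inf T by split; [exists b | exists a].
exists (inf T); last first.
  by rewrite lb_le_inf ?ge_inf//=; [exact: hinfT.2 | exists b].
move=> e e0; have [t Tt t_lt] := inf_adherent e0 hinfT.
have left_null : mu `[a, inf T - e]%classic = 0%E.
  apply/eqP; rewrite eq_le measure_ge0 andbT leNgt; apply/negP => /(ge_inf hinfT.2).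
  by apply/negP; rewrite -ltNge ltrBlDr ltrDl.
have sub : `[a, t]%classic `<=` `[a, inf T - e]%classic `|` ball (inf T) e.
  move=> z; rewrite /= !in_itv /= => /andP[az zt].
  have [ze|ze] := leP z (inf T - e); [left | right].
    by apply/andP.
  by rewrite ball_itv /= in_itv /= ze (le_lt_trans zt)// ltrBlDl addrC.
have mball := measurable_realfun.measurable_ball (inf T) e.
apply: (lt_le_trans Tt); apply: (le_trans (le_measure _ _ _ sub)); rewrite ?inE.
- exact: measurable_itv.
- by apply: measurableU => //; exact: measurable_itv.
apply: (le_trans (measureU2 _ (measurable_itv _) mball)).
by rewrite [X in (X + _)%E](_ : _ = 0%E) ?add0e.
Qed.

Lemma supp_bigcup_itv (a b : nat -> R) (A : set R) : measurable A ->
  A `<=` \bigcup_n `[a n, b n]%classic -> (0 < mu A)%E ->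
  exists n, exists2 p, supp mu p & a n <= p <= b n.
Proof.
move=> mA sub mu_pos.
suff [n mu_n] : exists n, (0 < mu `[a n, b n]%classic)%E.
  by exists n; exact: supp_itv.
apply/not_existsP => mu_n0; move: mu_pos; apply/negP; rewrite -leNgt.
apply: le_trans (measure_sigma_subadditive _ _ mA sub) _.
  by move=> n; exact: measurable_itv.
rewrite eseries0 // => n _ _; apply/eqP; rewrite eq_le measure_ge0 andbT leNgt.
by apply/negP; exact: mu_n0.
Qed.

Lemma supp_gt0 : (0 < mu [set x | 0 < x]%R)%E -> exists2 p, supp mu p & 0 < p.
Proof.
have mpos : measurable [set x : R | 0 < x] by rewrite -set_itvoy; exact: measurable_itv.
have cover : [set x : R | 0 < x] `<=` \bigcup_n `[n.+1%:R^-1, n.+1%:R]%classic.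
  by move=> x /= /gt0_inv_nat_le[n xn]; exists n => //=; rewrite in_itv.
move=> /(supp_bigcup_itv mpos cover)[n [p sp /andP[np _]]].
by exists p => //; apply: lt_le_trans np; rewrite invr_gt0.
Qed.

Lemma supp_lt0 : (0 < mu [set x | x < 0]%R)%E -> exists2 p, supp mu p & p < 0.
Proof.
have mneg : measurable [set x : R | x < 0] by rewrite -set_itvNyo; exact: measurable_itv.
have cover : [set x : R | x < 0] `<=` \bigcup_n `[- n.+1%:R, - n.+1%:R^-1]%classic.
  move=> x /=; rewrite -oppr_gt0 => /gt0_inv_nat_le[n xn]; exists n => //=.
  by rewrite in_itv /= lerNl andbC lerNr.
move=> /(supp_bigcup_itv mneg cover)[n [p sp /andP[_ pn]]].
by exists p => //; apply: le_lt_trans pn _; rewrite oppr_lt0 invr_gt0.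
Qed.

End support.

Section centered_probability.
Context (R : realType) (mu : probability R R).

Lemma eq_dirac0_of_null_sides : mu [set x : R | x < 0] = 0%E -> mu [set x : R | 0 < x] = 0%E ->
  forall A, measurable A -> mu A = \d_(0 : R) A.
Proof.
move=> neg0 pos0 A mA.
have mneg : measurable [set x : R | x < 0] by rewrite -set_itvNyo; exact: measurable_itv.
have mpos : measurable [set x : R | 0 < x] by rewrite -set_itvoy; exact: measurable_itv.
have null_off0 (B : set R) : measurable B -> ~ B 0 -> mu B = 0%E.
  move=> mB B0; apply/eqP; rewrite eq_le measure_ge0 andbT.
  have sub : B `<=` [set x : R | x < 0] `|` [set x : R | 0 < x].
    by move=> x Bx; have [x0|x0|x0] := ltgtP x 0; [left|right|move: Bx; rewrite x0].
  apply: le_trans (le_measure _ _ _ sub) _; rewrite ?inE//; first exact: measurableU.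
  apply: le_trans (measureU2 _ mneg mpos) _.
  by rewrite [X in (X + _)%E](_ : _ = 0%E) ?[X in (_ + X)%E](_ : _ = 0%E) ?adde0.
rewrite diracE; have [/set_mem A0|A0] := boolP (0 \in A).
  have mCA : measurable (~` A) := measurableC mA.
  by rewrite -[A]setCK probability_setC// null_off0 ?sube0// => /(_ A0).
by rewrite null_off0// => /mem_set; exact/negP.
Qed.

Hypotheses (intx : mu.-integrable setT (fun x => x%:E))
  (mean0 : (\int[mu]_x x%:E = 0)%E).

Lemma centered_null_sides : mu [set x : R | x < 0] = 0%E <-> mu [set x : R | 0 < x] = 0%E.
Proof.
split=> [neg0|pos0]; last exact: (measure_lt0_eq0_of_integral_eq0 (g := id)).
have intN : mu.-integrable setT (EFin \o -%R).
  by rewrite (_ : EFin \o -%R = -%E \o EFin) //; exact: integrableN.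
have meanN : (\int[mu]_x (- x)%:E = 0)%E.
  rewrite (eq_integral (fun x : R => - x%:E))%E// integralN ?mean0 ?oppe0//.
  apply: fin_num_adde_defl; rewrite fin_numN.
  exact: integrable_neg_fin_num.
have := measure_lt0_eq0_of_integral_eq0 intN meanN.
rewrite (_ : [set x | 0 < - x] = [set x : R | x < 0]); last by apply/seteqP; split => x /=; rewrite oppr_gt0.
rewrite (_ : [set x | - x < 0] = [set x : R | 0 < x]); last by apply/seteqP; split => x /=; rewrite oppr_lt0.
exact.
Qed.

Lemma centered_not_dirac0_sides_gt0 : (exists A, measurable A /\ mu A <> \d_(0 : R) A) ->
  (0 < mu [set x : R | x < 0]%R)%E /\ (0 < mu [set x : R | 0 < x]%R)%E.
Proof.
move=> [A [mA muA]].
suff neg_neq0 : mu [set x : R | x < 0] <> 0%E.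
  rewrite !lt0e !measure_ge0 !andbT; split; apply/eqP => //.
  by rewrite -centered_null_sides.
by move=> neg0; apply: muA; apply: eq_dirac0_of_null_sides => //; exact/centered_null_sides.
Qed.

End centered_probability.

Section qfun_lower_bound.
Context (R : realType) (eta : R -> R).
Local Notation lam := (@lebesgue_measure R).

Lemma integral_itv_ge (F : R -> \bar R) (a b m1 m2 c : R) :
  a <= m1 -> m1 <= m2 -> m2 <= b -> 0 <= c ->
  (forall u, a <= u <= b -> (0 <= F u)%E) -> (forall u, m1 <= u <= m2 -> (c%:E <= F u)%E) ->
  ((c * (m2 - m1))%:E <= \int[lam]_(u in `[a, b]) F u)%E.
Proof.
move=> am1 m12 m2b c0 F0 Fc.
have sub : `[m1, m2] `<=` `[a, b]%classic.
  by move=> u; rewrite /= !in_itv /= => /andP[m1u um2]; rewrite (le_trans am1)// (le_trans um2).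
have lam_m : lam (`[m1, m2] : set (measurableTypeR R)) = (m2 - m1)%:E.
  rewrite lebesgue_measure_itv/= lte_fin; case: ltgtP m12 => //= ->.
  by rewrite subrr.
apply: le_trans (@integral_ge_measure _ (measurableTypeR R) R lam _ _ F c
  (measurable_itv `[a, b]) (measurable_itv `[m1, m2]) c0 _ _).
- by rewrite (setIidl sub) EFinM -lam_m.
- by move=> u; rewrite /= in_itv /=; exact: F0.
- by move=> u _; rewrite /= in_itv /=; exact: Fc.
Qed.

Lemma twoinvsq_ge0 (z : R) : (0 <= twoinvsq eta z)%E.
Proof.
by rewrite /twoinvsq; case: ifPn => // _; rewrite lee_fin divr_ge0 ?sqr_ge0.
Qed.

Lemma twoinvsq_ge (C z : R) : 0 < C -> `|eta z| <= C -> ((2 / C ^+ 2)%:E <= twoinvsq eta z)%E.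
Proof.
move=> C0 etaC; rewrite /twoinvsq; case: ifPn => [_|eta0]; first exact: leey.
have eta2_gt0 : 0 < eta z ^+ 2 by rewrite lt0r sqrf_eq0 eta0 sqr_ge0.
rewrite lee_fin ler_pM2l// lef_pV2 ?posrE ?eta2_gt0 ?exprn_gt0//.
by rewrite -(real_normK (num_real (eta z))) lerXn2r ?nnegrE// ltW.
Qed.

Lemma qfun_ge0 (y x : R) : (0 <= qfun eta y x)%E.
Proof.
by rewrite /qfun; case: ifPn => _; apply: integral_ge0 => u _;
  apply: integral_ge0 => z _; exact: twoinvsq_ge0.
Qed.

Lemma qfun_ge (y w K : R) : 0 <= K ->
  (forall z, Num.min y w <= z <= Num.max y w -> (K%:E <= twoinvsq eta z)%E) ->
  ((K * (w - y) ^+ 2 / 4)%:E <= qfun eta y w)%E.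
Proof.
move=> K0 HK; pose m := (y + w) / 2.
have inner_ge0 u v : (0 <= \int[lam]_(z in `[u, v]) twoinvsq eta z)%E.
  by apply: integral_ge0 => z _; exact: twoinvsq_ge0.
have inner_ge u v : u <= v -> Num.min y w <= u -> v <= Num.max y w ->
    ((K * (v - u))%:E <= \int[lam]_(z in `[u, v]) twoinvsq eta z)%E.
  move=> uv yu vw; apply: integral_itv_ge => // z /andP[uz zv].
    exact: twoinvsq_ge0.
  by apply: HK; rewrite (le_trans yu uz) (le_trans zv vw).
rewrite /qfun; case: ifPn => [yw|]; last rewrite -ltNge => /ltW wy.
- move: inner_ge; rewrite (min_idPl yw) (max_idPr yw) => inner_ge.
  have -> : K * (w - y) ^+ 2 / 4 = K * (w - y) / 2 * (w - m) by rewrite /m; field.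
  apply: integral_itv_ge; rewrite ?divr_ge0 ?mulr_ge0 ?subr_ge0 /m //; try lra.
  move=> u /andP[mu uw]; apply: le_trans (inner_ge _ _ _ _ _); rewrite ?lee_fin; try lra.
  by rewrite -mulrA ler_wpM2l//; lra.
- move: inner_ge; rewrite (min_idPr wy) (max_idPl wy) => inner_ge.
  have -> : K * (w - y) ^+ 2 / 4 = K * (y - w) / 2 * (m - w) by rewrite /m; field.
  apply: integral_itv_ge; rewrite ?divr_ge0 ?mulr_ge0 ?subr_ge0 /m //; try lra.
  move=> u /andP[wu um]; apply: le_trans (inner_ge _ _ _ _ _); rewrite ?lee_fin; try lra.
  by rewrite -mulrA ler_wpM2l//; lra.
Qed.

End qfun_lower_bound.

Lemma Gfun_ge (R : realType) (eta : R -> R) (mu : probability R R) (S : set R)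
    (y a C k rho d : R) :
  measurable S -> 0 < C -> 0 <= k -> 0 <= rho -> 0 < d -> k * d <= a ->
  (forall x, S x -> rho <= `|x|) ->
  (forall x z, S x -> Num.min y (y + a * x) <= z <= Num.max y (y + a * x) ->
    `|eta z| <= C * d) ->
  ((k ^+ 2 * rho ^+ 2 / (2 * C ^+ 2))%:E * mu S <= Gfun eta mu y a)%E.
Proof.
move=> mS C0 k0 rho0 d0 kda rhoS etaS.
have Cd0 : 0 < C * d by rewrite mulr_gt0.
have a0 : 0 <= a by apply: le_trans kda; rewrite mulr_ge0// ltW.
rewrite -[S]setIT; apply: (integral_ge_measure _ measurableT mS _ (fun x _ => qfun_ge0 _ _ _)).
  by apply: divr_ge0; apply: mulr_ge0 => //; exact: sqr_ge0.
move=> x _ Sx; apply: le_trans (qfun_ge (K := 2 / (C * d) ^+ 2) _ _); last 2 first.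
- by rewrite divr_ge0 ?sqr_ge0.
- by move=> z /(etaS _ _ Sx); exact: twoinvsq_ge.
have kdrho2 : (k * d * rho) ^+ 2 <= (a * x) ^+ 2.
  rewrite -(real_normK (num_real (a * x))) lerXn2r ?nnegrE ?normr_ge0 ?mulr_ge0 ?(ltW d0)//.
  by rewrite normrM (ger0_norm a0) ler_pM ?mulr_ge0 ?rhoS// ltW.
rewrite lee_fin addrAC subrr add0r.
rewrite (_ : k ^+ 2 * rho ^+ 2 / (2 * C ^+ 2) = (k * d * rho) ^+ 2 / (2 * (C * d) ^+ 2)); last first.
  by field; rewrite !gt_eqF.
rewrite (_ : 2 / (C * d) ^+ 2 * (a * x) ^+ 2 / 4 = (a * x) ^+ 2 / (2 * (C * d) ^+ 2)); last first.
  by field; rewrite !gt_eqF.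
by rewrite ler_wpM2r// invr_ge0 mulr_ge0 ?sqr_ge0.
Qed.

Section near_boundary.
Context (R : realType).

Lemma near_at_rightP (l : R) (P : R -> Prop) : (\forall x \near l^'+, P x) <->
  exists2 e : R, 0 < e & forall x, l < x < l + e -> P x.
Proof.
rewrite near_withinE; split => [/nbhs_ballP[e e0 He]|[e e0 He]].
  exists e => // x /andP[lx xe]; apply: He => //.
  by rewrite /ball /= ltr_norml; apply/andP; split; lra.
apply/nbhs_ballP; exists e => // x; rewrite /ball /= ltr_norml => /andP[h1 h2] lx.
by apply: He; apply/andP; split; lra.
Qed.

Lemma near_at_leftP (r : R) (P : R -> Prop) : (\forall x \near r^'-, P x) <->
  exists2 e : R, 0 < e & forall x, r - e < x < r -> P x.
Proof.
rewrite near_withinE; split => [/nbhs_ballP[e e0 He]|[e e0 He]].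
  exists e => // x /andP[xe xr]; apply: He => //.
  by rewrite /ball /= ltr_norml; apply/andP; split; lra.
apply/nbhs_ballP; exists e => // x; rewrite /ball /= ltr_norml => /andP[h1 h2] xr.
by apply: He; apply/andP; split; lra.
Qed.

Lemma norm_le_of_ratio_le_right (eta : R -> R) (l e C y : R) :
  (forall x, x <= l -> eta x = 0) ->
  (forall x, l < x < l + e -> `|eta x| / (x - l) <= C) ->
  l < y < l + e -> forall z, z <= y -> `|eta z| <= Num.max C 1 * (y - l).
Proof.
move=> eta0 etaC /andP[ly ye] z zy.
have C1_ge0 : 0 <= Num.max C 1 by rewrite le_max ler01 orbT.
have [zl|lz] := leP z l; first by rewrite eta0// normr0 mulr_ge0// subr_ge0 ltW.
have /etaC : l < z < l + e by rewrite lz; lra.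
rewrite ler_pdivrMr ?subr_gt0// => /le_trans; apply.
apply: (@le_trans _ _ (Num.max C 1 * (z - l))).
  by rewrite ler_wpM2r ?le_max ?lexx// subr_ge0 ltW.
by rewrite ler_wpM2l// lerD2r.
Qed.

Lemma norm_le_of_ratio_le_left (eta : R -> R) (r e C y : R) :
  (forall x, r <= x -> eta x = 0) ->
  (forall x, r - e < x < r -> `|eta x| / (r - x) <= C) ->
  r - e < y < r -> forall z, y <= z -> `|eta z| <= Num.max C 1 * (r - y).
Proof.
move=> eta0 etaC /andP[ey yr] z yz.
have -> : r - y = - y - - r by ring.
have -> : eta z = (eta \o -%R) (- z) by rewrite /= opprK.
apply: (@norm_le_of_ratio_le_right _ (- r) e) => /=.
- by move=> x; rewrite lerNr; exact: eta0.
- move=> x xr; rewrite (_ : x - - r = r - - x); first by apply: etaC; lra.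
  by ring.
- lra.
- by rewrite lerNl opprK.
Qed.
End near_boundary.

Lemma ball_half_norm (R : realType) (p x : R) :
  ball p (`|p| / 2) x -> `|p| / 2 <= `|x| /\ 0 < p * x.
Proof.
rewrite ball_itv /= in_itv /=.
have [p0|p0|->] := ltgtP p 0; last by rewrite normr0; lra.
- rewrite ltr0_norm// => /andP[px xp]; rewrite ltr0_norm; last lra.
  split; [lra | nra].
- rewrite gtr0_norm// => /andP[px xp]; rewrite gtr0_norm; last lra.
  split; [lra | nra].
Qed.

Section abar_bound.
Context (R : realType) (eta : R -> R) (mu : probability R R) (l r : R).
Hypotheses (inf_supp_lt0 : inf (supp mu) < 0) (sup_supp_gt0 : 0 < sup (supp mu)).
Let ka := Num.min (- inf (supp mu))^-1 (sup (supp mu))^-1.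

Let ka_gt0 : 0 < ka.
Proof. by rewrite lt_min !invr_gt0 oppr_gt0 inf_supp_lt0. Qed.

Lemma abar_ge (y : R) : l <= y <= r -> ka * Num.min (y - l) (r - y) <= abar mu l r y.
Proof.
move=> /andP[ly yr]; have d_ge0 : 0 <= Num.min (y - l) (r - y) by rewrite le_min !subr_ge0 ly.
rewrite /abar le_min; apply/andP; split.
  rewrite (_ : (l - y) / _ = (- inf (supp mu))^-1 * (y - l)); last first.
    by field; rewrite lt_eqF.
  by apply: ler_pM => //; rewrite ?(ltW ka_gt0)// /ka ge_min lexx.
rewrite mulrC; apply: ler_pM => //; rewrite ?(ltW ka_gt0)//.
  by rewrite ge_min lexx orbT.
by rewrite /ka ge_min lexx orbT.
Qed.

Lemma Gfun_abar_ge (p C : R) : supp mu p -> p != 0 -> 0 < C ->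
  exists2 c : R, 0 < c & forall y, l < y < r ->
    (forall z, 0 <= p * (z - y) -> `|eta z| <= C * Num.min (y - l) (r - y)) ->
    (c%:E <= Gfun eta mu y (abar mu l r y))%E.
Proof.
move=> supp_p p0 C0; pose S := ball p (`|p| / 2).
have mS : measurable S := measurable_realfun.measurable_ball p _.
have rho_gt0 : 0 < `|p| / 2 by rewrite divr_gt0 ?normr_gt0.
have muS_gt0 : (0 < mu S)%E := supp_p _ rho_gt0.
exists (ka ^+ 2 * (`|p| / 2) ^+ 2 / (2 * C ^+ 2) * fine (mu S)).
  apply: mulr_gt0; last by rewrite fine_gt0// muS_gt0 ltey_eq fin_num_measure.
  by apply: divr_gt0; apply: mulr_gt0 => //; exact: exprn_gt0.
move=> y /andP[ly yr] etaC.
have d_gt0 : 0 < Num.min (y - l) (r - y) by rewrite lt_min !subr_gt0 ly.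
have abar_ge' := abar_ge (y := y); rewrite (ltW ly) (ltW yr) in abar_ge'.
have a_ge0 : 0 <= abar mu l r y by apply: le_trans (abar_ge' isT); rewrite mulr_ge0 ?ltW.
rewrite EFinM fineK ?fin_num_measure//.
apply: Gfun_ge (abar_ge' isT) _ _ => //; rewrite ?ltW//.
  by move=> x /ball_half_norm[].
move=> x z /ball_half_norm[_ px] zy; apply: etaC.
have [x0|x0] := leP 0 x.
  have yax : y <= y + abar mu l r y * x by rewrite lerDl mulr_ge0.
  move: zy; rewrite (min_idPl yax) (max_idPr yax) => /andP[yz _].
  have : 0 < p by nra.
  nra.
have yax : y + abar mu l r y * x <= y by rewrite gerDl mulr_ge0_le0// ltW.
move: zy; rewrite (min_idPr yax) (max_idPl yax) => /andP[_ zy].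
have : p < 0 by nra.
nra.
Qed.

End abar_bound.

Section Gfun_near_boundary.
Context (R : realType) (eta : R -> R) (mu : probability R R) (l r : R).
Hypotheses (lr : l < r) (eta_out : forall x, ~ (l < x < r) -> eta x = 0).
Hypotheses (inf_supp_lt0 : inf (supp mu) < 0) (sup_supp_gt0 : 0 < sup (supp mu)).

Lemma Gfun_abar_near_left (p : R) : supp mu p -> p < 0 ->
  (exists C : R, \forall x \near l^'+, `|eta x| / (x - l) <= C) ->
  exists c : R, 0 < c /\ \forall y \near l^'+, (c%:E <= Gfun eta mu y (abar mu l r y))%E.
Proof.
move=> supp_p p_lt0 [C /near_at_rightP[e e_gt0 etaC]].
have C1_gt0 : 0 < Num.max C 1 by rewrite lt_max ltr01 orbT.
have [c c_gt0 Gc] := Gfun_abar_ge eta l r inf_supp_lt0 sup_supp_gt0 supp_p (ltr0_neq0 p_lt0) C1_gt0.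
exists c; split => //; apply/near_at_rightP.
exists (Num.min e ((r - l) / 2)); first by rewrite lt_min e_gt0 divr_gt0// subr_gt0.
move=> y /andP[ly]; rewrite -ltrBlDl lt_min => /andP[ye yh]; apply: Gc; first by apply/andP; lra.
move=> z pz; rewrite (min_idPl _); last lra.
apply: (@norm_le_of_ratio_le_right _ _ _ e) => //; last nra.
- by move=> x xl; apply: eta_out; lra.
- by apply/andP; lra.
Qed.

Lemma Gfun_abar_near_right (p : R) : supp mu p -> 0 < p ->
  (exists C : R, \forall x \near r^'-, `|eta x| / (r - x) <= C) ->
  exists c : R, 0 < c /\ \forall y \near r^'-, (c%:E <= Gfun eta mu y (abar mu l r y))%E.
Proof.
move=> supp_p p_gt0 [C /near_at_leftP[e e_gt0 etaC]].
have C1_gt0 : 0 < Num.max C 1 by rewrite lt_max ltr01 orbT.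
have [c c_gt0 Gc] := Gfun_abar_ge eta l r inf_supp_lt0 sup_supp_gt0 supp_p (lt0r_neq0 p_gt0) C1_gt0.
exists c; split => //; apply/near_at_leftP.
exists (Num.min e ((r - l) / 2)); first by rewrite lt_min e_gt0 divr_gt0// subr_gt0.
move=> y /andP[+ yr]; rewrite ltrBlDr -ltrBlDl lt_min => /andP[ye yh].
apply: Gc; first by apply/andP; lra.
move=> z pz; rewrite (min_idPr _); last lra.
apply: (@norm_le_of_ratio_le_left _ _ _ e) => //; last nra.
- by move=> x xr; apply: eta_out; lra.
- by apply/andP; lra.
Qed.

End Gfun_near_boundary.

Unset Implicit Arguments.

Theorem mainTheorem11 (R : realType) (l r m : R) (eta : R -> R)
  (mu : probability R R) :
  l < r ->
  measurable_fun setT eta ->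
  (forall x, l < x < r -> eta x != 0) ->
  (forall a b, l < a -> b < r ->
     lebesgue_measure.-integrable `[a, b] (fun z => ((eta z ^+ 2)^-1)%:E)) ->
  (forall x, ~ (l < x < r) -> eta x = 0) ->
  l < m < r ->
  mu.-integrable setT (fun x => x%:E) ->
  (\int[mu]_x x%:E = 0)%E ->
  (exists A, measurable A /\ mu A <> \d_(0 : R) A) ->
  has_lbound (supp mu) -> has_ubound (supp mu) ->
  ((exists C : R, \forall x \near l^'+, `|eta x| / (x - l) <= C) ->
     qfun eta m x @[x --> l^'+] --> +oo%E ->
     exists c : R, 0 < c /\
       \forall y \near l^'+, (c%:E <= Gfun eta mu y (abar mu l r y))%E) /\
  ((exists C : R, \forall x \near r^'-, `|eta x| / (r - x) <= C) ->
     qfun eta m x @[x --> r^'-] --> +oo%E ->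
     exists c : R, 0 < c /\
       \forall y \near r^'-, (c%:E <= Gfun eta mu y (abar mu l r y))%E).
Proof.
move=> lr _ _ _ eta_out _ intx mean0 not_dirac lb_supp ub_supp.
have [neg_gt0 pos_gt0] := centered_not_dirac0_sides_gt0 intx mean0 not_dirac.
have [pn supp_pn pn_lt0] := supp_lt0 neg_gt0.
have [pp supp_pp pp_gt0] := supp_gt0 pos_gt0.
have inf_lt0 : inf (supp mu) < 0 := le_lt_trans (ge_inf lb_supp supp_pn) pn_lt0.
have sup_gt0 : 0 < sup (supp mu).
  by apply: lt_le_trans pp_gt0 (sup_upper_bound _ supp_pp); split; [exists pp | ].
split=> [bound_l _|bound_r _].
- exact (Gfun_abar_near_left lr eta_out inf_lt0 sup_gt0 supp_pn pn_lt0 bound_l).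
- exact (Gfun_abar_near_right lr eta_out inf_lt0 sup_gt0 supp_pp pp_gt0 bound_r).
Qed.
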